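(* Let $n\ge 2$ and $\alpha\in(0,2]$. Define the $n$-qubit observables $\mathcal{M}_Z=(|0\rangle\langle 0|)^{\otimes n}+(|1\rangle\langle 1|)^{\otimes n}$ and $\mathcal{M}_X=\sigma_x^{\otimes n}$, where $\sigma_x=|0\rangle\langle 1|+|1\rangle\langle 0|$. Then for every biseparable $n$-qubit state $\rho$, $$\alpha\operatorname{Tr}[\rho\,\mathcal{M}_Z]\pm\operatorname{Tr}[\rho\,\mathcal{M}_X]\le \frac{\alpha}{2}+1$$ for both choices of sign.
   Context: $\{|0\rangle,|1\rangle\}$ is the computational basis of $\mathbb{C}^2$. An $n$-qubit pure state is biseparable if the $n$ qubits can be split into two nonempty disjoint subsets such that the state is a tensor product of a pure state on the first subset and a pure state on the second. A mixed $n$-qubit state is biseparable if it is a convex combination of projectors onto biseparable pure states (the bipartitions may differ between terms). *)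

(* Complex scalars: an arbitrary numClosedFieldType C
   (e.g. algC, or complex R for a real closed field R). *)
From HB Require Import structures.
From mathcomp Require Import all_boot all_order all_algebra.
Set Implicit Arguments. Unset Strict Implicit. Unset Printing Implicit Defensive.
Import Order.TTheory GRing.Theory Num.Theory.
Local Open Scope ring_scope.

(* Computational basis of (C^2)^{\otimes n}: bit strings x : 'I_n -> bool,
   bit false = |0>, bit true = |1>. *)
Definition bits (n : nat) := {ffun 'I_n -> bool}.

Section QubitDefs.
Variable C : numClosedFieldType.
Variable n : nat.

Definition qvec := bits n -> C.
Definition qop := bits n -> bits n -> C.

Definition proj0 : bool -> bool -> C := fun b c => ((~~ b) && (~~ c))%:R.
Definition proj1 : bool -> bool -> C := fun b c => (b && c)%:R.
Definition sigma_x : bool -> bool -> C := fun b c => (b != c)%:R.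

Definition tens_pow (A : bool -> bool -> C) : qop :=
  fun x y => \prod_(i < n) A (x i) (y i).

Definition MZ : qop := fun x y => tens_pow proj0 x y + tens_pow proj1 x y.
Definition MX : qop := tens_pow sigma_x.

Definition trace_prod (rho M : qop) : C :=
  \sum_(x : bits n) \sum_(y : bits n) rho x y * M y x.

Definition normalized (psi : qvec) : Prop :=
  \sum_(x : bits n) psi x * (psi x)^* = 1.

(* f depends only on the qubits in S, i.e. f is a vector on the subsystem S
   (written as a function of the full bit string). *)
Definition depends_only_on (S : {set 'I_n}) (f : qvec) : Prop :=
  forall x y : bits n, (forall i, i \in S -> x i = y i) -> f x = f y.

(* psi = phi_S \otimes chi_{S^c} for a nontrivial bipartition (S, S^c) *)
Definition biseparable_pure (psi : qvec) : Prop :=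
  normalized psi /\
  exists S : {set 'I_n}, [/\ S != set0, S != setT &
    exists phi chi : qvec, [/\ depends_only_on S phi,
      depends_only_on (~: S) chi & forall x, psi x = phi x * chi x]].

Definition proj_op (psi : qvec) : qop := fun x y => psi x * (psi y)^*.

Definition biseparable (rho : qop) : Prop :=
  exists (m : nat) (p : 'I_m -> C) (psi : 'I_m -> qvec),
    [/\ forall k, 0 <= p k,
        \sum_(k < m) p k = 1,
        forall k, biseparable_pure (psi k) &
        forall x y, rho x y = \sum_(k < m) p k * proj_op (psi k) x y].

End QubitDefs.

(** For a pure state psi let a = |psi(0...0)|, b = |psi(1...1)| and let ~x be the bitwise
    complement of x, so that X = Tr[|psi><psi| M_X] = sum_x psi(x) conj(psi(~x)) is real.
    Since sum_x (|psi x| - |psi ~x|)^2 >= 2 (a - b)^2, we get |X| <= 1 - (a - b)^2.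
    If psi = phi_S (x) chi_{S^c}, then psi(0...0) psi(1...1) = psi(u) psi(v), where u and v
    splice 0...0 and 1...1 along S; u and v differ from 0...0, 1...1 and from each other, so
    2ab <= |psi u|^2 + |psi v|^2 <= 1 - (a^2 + b^2).  With P = a^2 + b^2, the first bound
    settles the case P <= 1/2 and the two together the case P >= 1/2, which gives
    alpha P + |X| <= alpha/2 + 1; mixed states follow by linearity in rho. *)
From HB Require Import structures.
From mathcomp Require Import all_boot all_order all_algebra.
From mathcomp Require Import ring.
Set Implicit Arguments. Unset Strict Implicit. Unset Printing Implicit Defensive.
Import Order.TTheory GRing.Theory Num.Theory.
Local Open Scope ring_scope.

Lemma prodr_natb (R : comPzSemiRingType) (I : finType) (b : I -> bool) :
  \prod_i ((b i)%:R : R) = ([forall i, b i])%:R.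
Proof.
case: (boolP [forall i, b i]) => [/forallP bT | /forallPn [i /negbTE bi]].
  by rewrite big1 // => i _; rewrite bT.
by rewrite (bigD1 i) //= bi mul0r.
Qed.

Lemma sumr_mul_eqb (R : pzSemiRingType) (I : finType) (G : I -> R) (c : I) :
  \sum_y G y * (y == c)%:R = G c.
Proof.
under eq_bigr => y _ do rewrite mulr_natr mulrb.
by rewrite -big_mkcond big_pred1_eq.
Qed.

Section RealInequalities.
Variable R : numDomainType.

Lemma ler_sum_uniq (I : finType) (F : I -> R) (s : seq I) :
  uniq s -> (forall x, 0 <= F x) -> \sum_(x <- s) F x <= \sum_x F x.
Proof.
move=> s_uniq F_ge0; rewrite big_uniq // [leRHS](bigID (mem s)) /= lerDl.
exact: sumr_ge0.
Qed.

Lemma sum_mul_involution_le (I : finType) (f : I -> I) (g : I -> R) (a : I) :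
  involutive f -> f a != a -> (forall x, g x \is Num.real) ->
  \sum_x g x * g (f x) <= \sum_x g x ^+ 2 - (g a - g (f a)) ^+ 2.
Proof.
move=> fK fa_neq g_real.
pose d x := (g x - g (f x)) ^+ 2.
have d_ge0 x : 0 <= d x by rewrite real_exprn_even_ge0 ?rpredB.
have sum_sq_f : \sum_x g (f x) ^+ 2 = \sum_x g x ^+ 2.
  by rewrite (reindex_inj (inv_inj fK)) /=; apply: eq_bigr => x _; rewrite fK.
have sum_d : \sum_x d x = (\sum_x g x ^+ 2 - \sum_x g x * g (f x)) *+ 2.
  rewrite (eq_bigr (fun x => g x ^+ 2 + g (f x) ^+ 2 - (g x * g (f x)) *+ 2));
    last by move=> x _; rewrite /d sqrrB addrAC.
  by rewrite sumrB big_split /= sum_sq_f sumrMnl mulrnBl mulr2n.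
have := @ler_sum_uniq _ d [:: a; f a]; rewrite /= inE eq_sym fa_neq => /(_ isT d_ge0).
rewrite !big_cons big_nil addr0 sum_d /d fK -sqrrN opprB -mulr2n.
rewrite lerMn2r /= => D_le.
by rewrite lerBrDr addrC -lerBrDr.
Qed.

Lemma convex_comb_le (I : finType) (p F : I -> R) (c : R) :
  (forall i, 0 <= p i) -> \sum_i p i = 1 -> (forall i, F i <= c) ->
  \sum_i p i * F i <= c.
Proof.
move=> p_ge0 p_sum F_le; rewrite -[leRHS]mul1r -p_sum mulr_suml.
by apply: ler_sum => i _; rewrite ler_wpM2l.
Qed.

Lemma convex_comb_affine_le (I : finType) (p F G : I -> R) (a c : R) :
  (forall i, 0 <= p i) -> \sum_i p i = 1 -> (forall i, a * F i + G i <= c) ->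
  a * (\sum_i p i * F i) + \sum_i p i * G i <= c.
Proof.
move=> p_ge0 p_sum FG_le; rewrite mulr_sumr -big_split /=.
under eq_bigr => i _ do rewrite mulrCA -mulrDr.
exact: convex_comb_le.
Qed.

End RealInequalities.

Lemma witness_arith (F : numFieldType) (alpha a b X : F) :
  0 < alpha -> alpha <= 2 -> a \is Num.real -> b \is Num.real ->
  2 * a * b <= 1 - (a ^+ 2 + b ^+ 2) -> X <= 1 - (a - b) ^+ 2 ->
  alpha * (a ^+ 2 + b ^+ 2) + X <= alpha / 2 + 1.
Proof.
move=> alpha_gt0 alpha_le2 a_real b_real ab_le X_le.
set P := a ^+ 2 + b ^+ 2.
have P_real : P \is Num.real by rewrite rpredD ?rpredX.
have half_real : (2^-1 : F) \is Num.real by rewrite rpredV rpred_nat.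
case/orP: (real_leVge P_real half_real) => P_half.
  apply: lerD; first by rewrite ler_pM2l.
  by rewrite (le_trans X_le) // lerBlDr lerDl real_exprn_even_ge0 ?rpredB.
apply: (le_trans (lerD (lexx _) X_le)); rewrite -subr_ge0.
have -> : alpha / 2 + 1 - (alpha * P + (1 - (a - b) ^+ 2)) =
    (2 - alpha) * (P - 2^-1) + (1 - P - 2 * a * b) by rewrite /P; field.
by rewrite addr_ge0 ?mulr_ge0 ?subr_ge0 // lerBrDr addrC -lerBrDr.
Qed.

Section Qubits.
Variables (C : numClosedFieldType) (n : nat).
Implicit Types (x y : bits n) (psi : qvec C n) (rho M : qop C n).

Definition zeros : bits n := [ffun _ => false].
Definition ones : bits n := [ffun _ => true].
Definition flip x : bits n := [ffun i => ~~ x i].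
Definition splice (S : {set 'I_n}) x y : bits n :=
  [ffun i => if i \in S then x i else y i].

Lemma flipK : involutive flip.
Proof. by move=> x; apply/ffunP => i; rewrite !ffunE negbK. Qed.

Lemma tens_pow_proj0 x y :
  tens_pow (@proj0 C) x y = ((x == zeros) && (y == zeros))%:R.
Proof.
rewrite /tens_pow /proj0 prodr_natb; congr (nat_of_bool _)%:R.
apply/forallP/andP => [xy0 | [/eqP-> /eqP->] i]; last by rewrite !ffunE.
by split; apply/eqP/ffunP => i; rewrite ffunE; case/andP: (xy0 i) => /negbTE ? /negbTE ?.
Qed.

Lemma tens_pow_proj1 x y :
  tens_pow (@proj1 C) x y = ((x == ones) && (y == ones))%:R.
Proof.
rewrite /tens_pow /proj1 prodr_natb; congr (nat_of_bool _)%:R.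
apply/forallP/andP => [xy1 | [/eqP-> /eqP->] i]; last by rewrite !ffunE.
by split; apply/eqP/ffunP => i; rewrite ffunE; case/andP: (xy1 i).
Qed.

Lemma tens_pow_sigma_x x y : tens_pow (@sigma_x C) x y = (flip x == y)%:R.
Proof.
rewrite /tens_pow /sigma_x prodr_natb; congr (nat_of_bool _)%:R.
apply/forallP/eqP => [xy_neq | <- i]; last by rewrite ffunE; case: (x i).
by apply/ffunP => i; rewrite ffunE; move: (xy_neq i); case: (x i); case: (y i).
Qed.

Lemma eq_trace_prod rho M1 M2 :
  (forall x y, M1 x y = M2 x y) -> trace_prod rho M1 = trace_prod rho M2.
Proof.
by move=> M12; apply: eq_bigr => x _; apply: eq_bigr => y _; rewrite M12.
Qed.

Lemma trace_prodDr rho M1 M2 :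
  trace_prod rho (fun x y => M1 x y + M2 x y) = trace_prod rho M1 + trace_prod rho M2.
Proof.
rewrite /trace_prod -big_split; apply: eq_bigr => x _.
by rewrite -big_split; apply: eq_bigr => y _; rewrite mulrDr.
Qed.

Lemma trace_prod_combl (I : finType) (p : I -> C) (rho_ : I -> qop C n) rho M :
  (forall x y, rho x y = \sum_i p i * rho_ i x y) ->
  trace_prod rho M = \sum_i p i * trace_prod (rho_ i) M.
Proof.
move=> rhoE; rewrite /trace_prod.
under eq_bigr => x _ do under eq_bigr => y _ do rewrite rhoE mulr_suml.
under eq_bigr => x _ do rewrite exchange_big.
rewrite exchange_big; apply: eq_bigr => i _; rewrite mulr_sumr.
by apply: eq_bigr => x _; rewrite mulr_sumr; apply: eq_bigr => y _; rewrite mulrA.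
Qed.

Lemma trace_proj_basis psi c :
  trace_prod (proj_op psi) (fun x y => ((x == c) && (y == c))%:R) = `|psi c| ^+ 2.
Proof.
rewrite /trace_prod /proj_op normCK.
under eq_bigr => x _ do under eq_bigr => y _ do rewrite -mulnb natrM mulrA.
under eq_bigr => x _ do rewrite -mulr_suml sumr_mul_eqb.
by rewrite (sumr_mul_eqb (fun x => psi x * (psi c)^*)).
Qed.

Lemma trace_proj_MZ psi :
  trace_prod (proj_op psi) (@MZ C n) = `|psi zeros| ^+ 2 + `|psi ones| ^+ 2.
Proof.
rewrite trace_prodDr (eq_trace_prod _ tens_pow_proj0) (eq_trace_prod _ tens_pow_proj1).
by rewrite !trace_proj_basis.
Qed.

Lemma trace_proj_MX psi :
  trace_prod (proj_op psi) (@MX C n) = \sum_x psi x * (psi (flip x))^*.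
Proof.
apply: eq_bigr => x _; under eq_bigr => y _ do rewrite /MX tens_pow_sigma_x (inv_eq flipK).
exact: (sumr_mul_eqb (fun y => psi x * (psi y)^*)).
Qed.

Lemma sum_mul_conj_flip_real psi : \sum_x psi x * (psi (flip x))^* \is Num.real.
Proof.
rewrite CrealE rmorph_sum /= (reindex_inj (inv_inj flipK)) /=; apply/eqP.
by apply: eq_bigr => x _; rewrite rmorphM /= conjCK flipK mulrC.
Qed.

Lemma normalized_sum_norm2 psi : normalized psi -> \sum_x `|psi x| ^+ 2 = 1.
Proof. by move=> <-; apply: eq_bigr => x _; rewrite normCK. Qed.

Lemma norm_sum_mul_conj_flip_le psi : (0 < n)%N -> normalized psi ->
  `|\sum_x psi x * (psi (flip x))^*| <= 1 - (`|psi zeros| - `|psi ones|) ^+ 2.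
Proof.
move=> n_gt0 /normalized_sum_norm2 psi_norm.
have flip0 : flip zeros = ones by apply/ffunP => i; rewrite !ffunE.
have flip0_neq : flip zeros != zeros.
  by apply/eqP => /ffunP /(_ (Ordinal n_gt0)); rewrite !ffunE.
apply: (le_trans (ler_norm_sum _ _ _)).
under eq_bigr => x _ do rewrite normrM norm_conjC.
rewrite -psi_norm -flip0.
by apply: (sum_mul_involution_le flipK flip0_neq) => x; apply: normr_real.
Qed.

Lemma product_state_splice (S : {set 'I_n}) (phi chi : qvec C n) psi x y :
  depends_only_on S phi -> depends_only_on (~: S) chi ->
  (forall z, psi z = phi z * chi z) ->
  psi x * psi y = psi (splice S x y) * psi (splice S y x).
Proof.
move=> phi_S chi_Sc psiE; rewrite !psiE.
have phi_splice u v : phi (splice S u v) = phi u.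
  by apply: phi_S => i iS; rewrite ffunE iS.
have chi_splice u v : chi (splice S u v) = chi v.
  by apply: chi_Sc => i; rewrite inE ffunE => /negbTE->.
by rewrite !phi_splice !chi_splice; ring.
Qed.

Lemma biseparable_pure_cross_le psi : biseparable_pure psi ->
  2 * `|psi zeros| * `|psi ones| <= 1 - (`|psi zeros| ^+ 2 + `|psi ones| ^+ 2).
Proof.
move=> [/normalized_sum_norm2 psi_norm [S [S0 ST [phi [chi [phi_S chi_Sc psiE]]]]]].
have [i iS] := set0Pn _ S0.
have [j jS] : exists j, j \notin S.
  apply/existsP; apply: contraNT ST => /existsPn S_full.
  by apply/eqP/setP => k; rewrite inE; apply/negbNE.
set u := splice S zeros ones; set v := splice S ones zeros.
have uniq_s : uniq [:: zeros; ones; u; v].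
  apply: (@map_uniq _ _ (fun x : bits n => (x i, x j))).
  by rewrite /= !ffunE iS (negbTE jS).
have cross : 2 * `|psi zeros| * `|psi ones| <= `|psi u| ^+ 2 + `|psi v| ^+ 2.
  rewrite -mulrA -normrM (product_state_splice _ _ phi_S chi_Sc psiE) normrM mulr_natl.
  exact: (real_leif_mean_square_scaled (normr_real _) (normr_real _)).1.
have := ler_sum_uniq uniq_s (fun x => exprn_ge0 2 (normr_ge0 (psi x))).
rewrite psi_norm !big_cons big_nil addr0 => sum4_le.
rewrite lerBrDr; apply: le_trans (lerD cross (lexx _)) _.
by rewrite addrC -addrA.
Qed.

Lemma biseparable_pure_witness_le psi (alpha : C) :
  0 < alpha -> alpha <= 2 -> biseparable_pure psi ->
  alpha * trace_prod (proj_op psi) (@MZ C n) + `|trace_prod (proj_op psi) (@MX C n)|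
    <= alpha / 2 + 1.
Proof.
move=> alpha_gt0 alpha_le2 psi_bisep.
have [psi_norm [S [S0 _ _]]] := psi_bisep.
have [i _] := set0Pn _ S0.
have n_gt0 : (0 < n)%N by apply: leq_ltn_trans (ltn_ord i).
rewrite trace_proj_MZ trace_proj_MX.
apply: witness_arith; rewrite ?normr_real //.
  exact: biseparable_pure_cross_le.
exact: norm_sum_mul_conj_flip_le.
Qed.

Lemma biseparable_pure_witness_pm psi (alpha : C) :
  0 < alpha -> alpha <= 2 -> biseparable_pure psi ->
  alpha * trace_prod (proj_op psi) (@MZ C n) + trace_prod (proj_op psi) (@MX C n)
    <= alpha / 2 + 1 /\
  alpha * trace_prod (proj_op psi) (@MZ C n) - trace_prod (proj_op psi) (@MX C n)
    <= alpha / 2 + 1.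
Proof.
move=> alpha_gt0 alpha_le2 /(biseparable_pure_witness_le alpha_gt0 alpha_le2) W_le.
have X_real := sum_mul_conj_flip_real psi; rewrite -trace_proj_MX in X_real.
split; apply: (le_trans _ W_le); rewrite lerD2l.
  exact: real_ler_norm.
by rewrite -normrN real_ler_norm ?rpredN.
Qed.

End Qubits.

Theorem theorem1 (C : numClosedFieldType) (n : nat) (alpha : C)
  (rho : qop C n) :
  (2 <= n)%N -> 0 < alpha -> alpha <= 2 -> biseparable rho ->
  alpha * trace_prod rho (@MZ C n) + trace_prod rho (@MX C n) <= alpha / 2 + 1 /\
  alpha * trace_prod rho (@MZ C n) - trace_prod rho (@MX C n) <= alpha / 2 + 1.
Proof.
(* [2 <= n] is implied: a biseparable state needs a nontrivial bipartition. *)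
move=> _ alpha_gt0 alpha_le2 [m [p [psi [p_ge0 p_sum psi_bisep rhoE]]]].
have W_le k := biseparable_pure_witness_pm alpha_gt0 alpha_le2 (psi_bisep k).
rewrite !(trace_prod_combl _ rhoE); split.
  by apply: convex_comb_affine_le => // k; case: (W_le k).
rewrite -sumrN (eq_bigr _ (fun k _ => esym (mulrN _ _))).
by apply: convex_comb_affine_le => // k; case: (W_le k).
Qed.
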